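(* Let $G$ be an abelian group and let $A,B,C$ be nonempty finite subsets of $G$ with $1\in C$. Then either $ABC=AB$ or $|ABC|\geq |A|+|B|$.
   Context: For subsets $X,Y,Z$ of a multiplicative group $G$, $XY=\{xy\mid x\in X,\ y\in Y\}$ and $XYZ=\{xyz\mid x\in X,\ y\in Y,\ z\in Z\}$. *)

(* An abelian group is modelled as a zmodType (written additively). *)
From HB Require Import structures.
From mathcomp Require Import all_boot all_order all_algebra.
Set Implicit Arguments. Unset Strict Implicit. Unset Printing Implicit Defensive.
Import GRing.Theory.
Local Open Scope ring_scope.

(* Finite subsets of G are represented by sequences; the sumset XY is the
   duplicate-free list of all x + y with x in X, y in Y. *)
Definition sumset (G : zmodType) (X Y : seq G) : seq G :=
  undup [seq x + y | x <- X, y <- Y].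

From HB Require Import structures.
From mathcomp Require Import all_boot all_order all_algebra.
Set Implicit Arguments. Unset Strict Implicit.
Import GRing.Theory.
Local Open Scope ring_scope.

(* Writing the abelian group additively, with finite sets as (duplicate-free)
   sequences, the key estimate is:
     if A, B are finite, a0 \in A, b0 \in B and a0 + b0 + c \notin A + B,
     then |A| + |B| <= |(A + B) \cup (A + B + c)|.
   It is proved by induction on |B| using the Dyson e-transform
     A' = A \cup (B + e),   B' = B \cap (A - e),   e = a1 - b0,
   which keeps |A| + |B|, shrinks A + B, and keeps a0 \in A', b0 \in B'.
   If no a1 \in A makes B' smaller than B, then A + (B - b0) \subseteq A; by
   finiteness A is then also closed under subtracting B - b0, and the
   disjoint sets A + b0 and a0 + b0 + c + (B - b0) inside
   (A + B) \cup (A + B + c) give the bound directly.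
   The theorem follows: since 0 \in C we have AB \subseteq ABC, so either
   ABC = AB, or some a0 + b0 + c \in ABC lies outside AB and the estimate
   applies, as (A + B) \cup (A + B + c) \subseteq ABC. *)

Section Sumsets.
Variable G : zmodType.
Implicit Types (A B X Y S : seq G) (c e t : G).

Lemma sumsetP X Y z :
  reflect (exists x y, [/\ x \in X, y \in Y & z = x + y]) (z \in sumset X Y).
Proof.
rewrite /sumset mem_undup; apply: (iffP allpairsP).
  by case=> [[x y]] /= [hx hy ->]; exists x, y.
by case=> x [y [hx hy ->]]; exists (x, y).
Qed.

Lemma mem_sumset X Y x y : x \in X -> y \in Y -> x + y \in sumset X Y.
Proof. by move=> hx hy; apply/sumsetP; exists x, y. Qed.

Lemma sumset_undup X Y : sumset (undup X) (undup Y) =i sumset X Y.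
Proof.
move=> z; apply/sumsetP/sumsetP => -[x [y [hx hy ->]]];
  by exists x, y; rewrite ?mem_undup in hx hy *.
Qed.

Definition shift_union c S := undup (S ++ [seq s + c | s <- S]).

Lemma mem_shift_union c S z :
  (z \in shift_union c S) = (z \in S) || (z \in [seq s + c | s <- S]).
Proof. by rewrite mem_undup mem_cat. Qed.

Lemma shift_union_size_mono c X Y : {subset X <= Y} ->
  (size (shift_union c X) <= size (shift_union c Y))%N.
Proof.
move=> sXY; apply: uniq_leq_size; first exact: undup_uniq.
move=> z; rewrite !mem_shift_union => /orP [/sXY -> //|/mapP [s hs ->]].
by rewrite (map_f (+%R^~ c) (sXY _ hs)) orbT.
Qed.

(* A finite set closed under adding t is also closed under subtracting t:
   translation by t maps it injectively into, hence onto, itself. *)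
Lemma addr_closed_subr X t :
  {in X, forall x, x + t \in X} -> {in X, forall x, x - t \in X}.
Proof.
move=> addX x hx; rewrite -mem_undup in hx.
have sub : {subset [seq y + t | y <- undup X] <= undup X}.
  by move=> _ /mapP [y hy ->]; rewrite mem_undup addX // -mem_undup.
have [_ eqX] := uniq_min_size (etrans (map_inj_uniq (addIr t) _) (undup_uniq X))
  sub (eq_leq (esym (size_map _ _))).
by move: hx; rewrite -eqX => /mapP [y hy ->]; rewrite addrK -mem_undup.
Qed.

Lemma stable_bound c A B a0 b0 :
  uniq A -> uniq B -> a0 \in A -> b0 \in B -> a0 + b0 + c \notin sumset A B ->
  {in A & B, forall a b, a + (b - b0) \in A} ->
  (size A + size B <= size (shift_union c (sumset A B)))%N.
Proof.
move=> uA uB ha0 hb0 hout stab.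
have stabN a b : a \in A -> b \in B -> a - (b - b0) \in A.
  by move=> ha hb; exact: (addr_closed_subr (fun x hx => stab x b hx hb) ha).
pose L := [seq a + b0 | a <- A] ++ [seq a0 + b0 + c + (b - b0) | b <- B].
have disj : {in B & A, forall b a, a0 + b0 + c + (b - b0) != a + b0}.
  move=> b a hb ha; apply: contraNneq hout => eq_ab.
  by rewrite -(addrK (b - b0) (a0 + b0 + c)) eq_ab addrAC mem_sumset ?stabN.
have uL : uniq L.
  have inj_shift : injective (fun b => a0 + b0 + c + (b - b0)).
    by move=> x y /addrI /addIr.
  rewrite cat_uniq (map_inj_uniq (addIr b0)) (map_inj_uniq inj_shift) uA uB andbT.
  apply/hasPn => _ /mapP [b hb ->]; apply/mapP => -[a ha /eqP].
  by rewrite (negbTE (disj _ _ hb ha)).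
rewrite -(size_map (+%R^~ b0)) -(size_map (fun b => a0 + b0 + c + (b - b0)) B).
rewrite -size_cat; apply: uniq_leq_size uL _ => z.
rewrite mem_cat mem_shift_union => /orP [] /mapP [x hx ->].
  by rewrite mem_sumset.
rewrite addrAC (addrAC a0).
by rewrite (map_f (+%R^~ c)) ?orbT // mem_sumset // stab.
Qed.

(* The Dyson e-transform of the pair (A, B): A' = A \cup (B + e) and
   B' = B \cap (A - e). *)
Definition dysonA e A B := A ++ [seq b + e | b <- B & b + e \notin A].
Definition dysonB e A B := [seq b <- B | b + e \in A].

Lemma dyson_sumset_sub e A B :
  {subset sumset (dysonA e A B) (dysonB e A B) <= sumset A B}.
Proof.
move=> _ /sumsetP [x [y [hx hy ->]]]; move: hy; rewrite mem_filter => /andP [hyA hy].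
move: hx; rewrite mem_cat => /orP [hx|/mapP [b]]; first by rewrite mem_sumset.
rewrite mem_filter => /andP [_ hb] ->.
by rewrite addrAC -addrA addrC mem_sumset.
Qed.

Lemma dysonA_uniq e A B : uniq A -> uniq B -> uniq (dysonA e A B).
Proof.
move=> uA uB; rewrite cat_uniq uA (map_inj_uniq (addIr e)) filter_uniq // andbT.
by apply/hasPn => z /mapP [b]; rewrite mem_filter => /andP [hb _] ->.
Qed.

Lemma dyson_size e A B :
  (size (dysonA e A B) + size (dysonB e A B) = size A + size B)%N.
Proof.
rewrite size_cat size_map !size_filter -addnA; congr (_ + _)%N.
by rewrite -(count_predC (fun b => b + e \in A) B) addnC.
Qed.

Lemma dysonB_size_lt e A B b :
  b \in B -> b + e \notin A -> (size (dysonB e A B) < size B)%N.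
Proof.
move=> hb hbe; rewrite size_filter -(count_predC (fun b => b + e \in A) B).
by rewrite -[X in (X < _)%N]addn0 ltn_add2l -has_count; apply/hasP; exists b.
Qed.

Lemma shift_union_lower_bound c A B a0 b0 :
  uniq A -> uniq B -> a0 \in A -> b0 \in B -> a0 + b0 + c \notin sumset A B ->
  (size A + size B <= size (shift_union c (sumset A B)))%N.
Proof.
move: {2}(size B) (leqnn (size B)) => n.
elim: n A B a0 b0 => [|n IH] A B a0 b0 hB uA uB ha0 hb0 hout.
  by move: hB; rewrite leqn0 => /nilP Be; rewrite Be in hb0.
have [stab|] := boolP (all (fun a => all (fun b => a + (b - b0) \in A) B) A).
  apply: stable_bound uA uB ha0 hb0 hout _ => a b ha hb.
  by move/allP: stab => /(_ a ha) /allP /(_ b hb).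
case/allPn => a1 ha1 /allPn [b1 hb1]; rewrite addrCA => hb1e.
pose e := a1 - b0.
have hb0e : b0 + e \in A by rewrite /e addrC subrK.
apply: leq_trans (shift_union_size_mono c (@dyson_sumset_sub e A B)).
rewrite -(dyson_size e); apply: (IH _ _ a0 b0).
- by rewrite -ltnS (leq_trans (dysonB_size_lt hb1 hb1e)).
- exact: dysonA_uniq.
- exact: filter_uniq.
- by rewrite mem_cat ha0.
- by rewrite mem_filter hb0 hb0e.
- exact: contra (@dyson_sumset_sub e A B _) hout.
Qed.

End Sumsets.

Theorem mainTheorem2 (G : zmodType) (A B C : seq G) :
  A != [::] -> B != [::] -> C != [::] -> 0 \in C ->
  (sumset (sumset A B) C =i sumset A B) \/
  (size (undup A) + size (undup B) <= size (sumset (sumset A B) C))%N.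
Proof.
move=> _ _ _ hC0.
have [closed|] := boolP (all (fun y => y \in sumset A B) (sumset (sumset A B) C)).
  left => z; apply/idP/idP; first exact: (allP closed).
  by move=> hz; rewrite -(addr0 z) mem_sumset.
case/allPn => _ /sumsetP [_ [c [/sumsetP [a0 [b0 [ha0 hb0 ->]]] hc ->]]] hout.
right; rewrite -sumset_undup in hout.
apply: leq_trans (shift_union_lower_bound (undup_uniq A) (undup_uniq B) _ _ hout) _;
  rewrite ?mem_undup //.
apply: uniq_leq_size; first exact: undup_uniq.
move=> z; rewrite mem_shift_union => /orP [|/mapP [s hs ->]].
  by rewrite sumset_undup => hz; rewrite -(addr0 z) mem_sumset.
by rewrite mem_sumset // -sumset_undup.
Qed.
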